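(* Let $A=\bigoplus_{j\ge0}A_j$ be a positively graded ring (a positively graded monoid in the category of abelian groups) such that $A_0$ is a semisimple ring. Then $A$ is pre-Koszul.
   Context: $\mathbf{grA\text{-}Mod}$ is the category of graded left $A$-modules with degree-preserving homomorphisms. $A_0$ is regarded as a graded $A$-module concentrated in degree $0$ (via $A\to A/A_{>0}\cong A_0$), and $(M\langle n\rangle)_i=M_{i-n}$. A graded $A$-module $M$ is generated by its degree $i$ component over $A_0$ if the action map $A\otimes_{A_0}M_i\to M$ is surjective. $A$ is pre-Koszul if $A_0$ is injective as a module over itself, each $A_i$ is projective as an $A_0$-module, and for every $i$ and every graded $A$-module $M$ with $M_j=0$ for $j<i$, if $\mathrm{Hom}_{\mathbf{grA\text{-}Mod}}(M,A_0\langle n\rangle)=0$ for all $n\ne i$, then $M$ is generated by its degree $i$ component over $A_0$. *)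

From HB Require Import structures.
From mathcomp Require Import all_boot all_order all_algebra.
Set Implicit Arguments. Unset Strict Implicit. Unset Printing Implicit Defensive.
Import Order.TTheory GRing.Theory Num.Theory.
Local Open Scope ring_scope.

(* A positively graded ring is presented internally: a ring A together with
   additive subgroups G i (= A_i, i : nat) such that A = (+)_i A_i. *)

Definition addsub (V : zmodType) (P : pred V) : Prop :=
  0 \in P /\ (forall x y, x \in P -> y \in P -> x - y \in P).

Section Graded.
Variables (A : pzRingType) (G : nat -> pred A).

Definition pos_graded_ring : Prop :=
  [/\ forall i, addsub (G i),
      forall i j a b, a \in G i -> b \in G j -> a * b \in G (i + j)%N,
      1 \in G 0%N,
      forall a, exists (n : nat) (x : nat -> A),
          (forall i, x i \in G i) /\ a = \sum_(i < n) x i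
    & forall (n : nat) (x : nat -> A), (forall i, x i \in G i) ->
          \sum_(i < n) x i = 0 -> forall i, (i < n)%N -> x i = 0].

(* ---- A_0-modules (left), presented as a zmodType with an action of A
   that is only required to be a module action for scalars in A_0 ---- *)
Definition A0_module (X : zmodType) (act : A -> X -> X) : Prop :=
  forall r s x y, r \in G 0%N -> s \in G 0%N ->
    [/\ act 1 x = x, act (r * s) x = act r (act s x),
        act (r + s) x = act r x + act s x & act r (x + y) = act r x + act r y].

Definition A0_hom (X Y : zmodType) (actX : A -> X -> X) (actY : A -> Y -> Y)
  (f : X -> Y) : Prop :=
  (forall x y, f (x + y) = f x + f y) /\
  (forall r x, r \in G 0%N -> f (actX r x) = actY r (f x)).

(* A_0-linear maps out of the A_0-submodule P of A (left multiplication);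
   such maps are functions on A whose values outside P are irrelevant *)
Definition A0_hom_from (P : pred A) (Y : zmodType) (actY : A -> Y -> Y)
  (g : A -> Y) : Prop :=
  (forall a b, a \in P -> b \in P -> g (a + b) = g a + g b) /\
  (forall r a, r \in G 0%N -> a \in P -> g (r * a) = actY r (g a)).

Definition A0_hom_to0 (X : zmodType) (actX : A -> X -> X) (g : X -> A) : Prop :=
  [/\ forall x, g x \in G 0%N,
      forall x y, g (x + y) = g x + g y
    & forall r x, r \in G 0%N -> g (actX r x) = r * g x].

Definition A0_self_injective : Prop :=
  forall (X Y : zmodType) (actX : A -> X -> X) (actY : A -> Y -> Y)
         (iota : X -> Y) (g : X -> A),
    A0_module actX -> A0_module actY -> A0_hom actX actY iota ->
    injective iota -> A0_hom_to0 actX g ->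
    exists h : Y -> A, A0_hom_to0 actY h /\ forall x, h (iota x) = g x.

Definition A0_projective (P : pred A) : Prop :=
  forall (X Y : zmodType) (actX : A -> X -> X) (actY : A -> Y -> Y)
         (p : X -> Y) (g : A -> Y),
    A0_module actX -> A0_module actY -> A0_hom actX actY p ->
    (forall y, exists x, p x = y) -> A0_hom_from P actY g ->
    exists h : A -> X, A0_hom_from P actX h /\
                       forall a, a \in P -> p (h a) = g a.

Definition A0_left_ideal (I : pred A) : Prop :=
  [/\ forall a, a \in I -> a \in G 0%N, addsub I
    & forall r a, r \in G 0%N -> a \in I -> r * a \in I].

Definition A0_semisimple : Prop :=
  forall I : pred A, A0_left_ideal I ->
    exists J : pred A, [/\ A0_left_ideal J,
      forall a, a \in I -> a \in J -> a = 0
    & forall a, a \in G 0%N -> exists x y, [/\ x \in I, y \in J & a = x + y]].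

Definition graded_module (M : lmodType A) (MG : int -> pred M) : Prop :=
  [/\ forall j, addsub (MG j),
      forall (i : nat) (j : int) a m, a \in G i -> m \in MG j -> a *: m \in MG (i%:Z + j),
      forall m, exists (s : seq int) (x : int -> M),
          [/\ uniq s, forall k, x k \in MG k & m = \sum_(k <- s) x k]
    & forall (s : seq int) (x : int -> M), uniq s -> (forall k, x k \in MG k) ->
          \sum_(k <- s) x k = 0 -> forall k, k \in s -> x k = 0].

(* a0 is the image of a under A -> A/A_{>0} ~= A_0 *)
Definition deg0_part (a a0 : A) : Prop :=
  a0 \in G 0%N /\ exists (n : nat) (x : nat -> A),
     (forall i, x i \in G i.+1) /\ a - a0 = \sum_(i < n) x i.

(* degree-preserving A-homomorphisms M -> A_0<n>, where A_0<n> is A_0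
   concentrated in degree n, with A acting through A -> A_0 *)
Definition hom_to_A0_shift (M : lmodType A) (MG : int -> pred M) (n : int)
  (f : M -> A) : Prop :=
  [/\ forall m, f m \in G 0%N,
      forall m m', f (m + m') = f m + f m',
      forall (j : int) m, j != n -> m \in MG j -> f m = 0
    & forall a a0 m, deg0_part a a0 -> f (a *: m) = a0 * f m].

Definition Hom_to_A0_shift_zero (M : lmodType A) (MG : int -> pred M) (n : int) : Prop :=
  forall f : M -> A, hom_to_A0_shift MG n f -> forall m, f m = 0.

(* M is generated by M_i over A_0: A (x)_{A_0} M_i -> M is surjective *)
Definition generated_in_degree (M : lmodType A) (MG : int -> pred M) (i : int) : Prop :=
  forall m, exists (k : nat) (a : nat -> A) (x : nat -> M),
    (forall l, x l \in MG i) /\ m = \sum_(l < k) a l *: x l.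

Definition pre_Koszul : Prop :=
  [/\ A0_self_injective,
      forall i : nat, A0_projective (G i)
    & forall (M : lmodType A) (MG : int -> pred M) (i : int),
        graded_module MG ->
        (forall j : int, j < i -> forall m, m \in MG j -> m = 0) ->
        (forall n : int, n != i -> Hom_to_A0_shift_zero MG n) ->
        generated_in_degree MG i].

End Graded.

(* Over the semisimple ring A_0 every submodule N of a module X is a direct
   summand: take C maximal (Zorn) among the submodules meeting N trivially; if
   some y were outside N + C, the left ideal of the r with r y in N + C would
   have a complement J, and C + J y would be a larger submodule still meeting N
   trivially. Hence A_0-linear injections have retractions and surjections have
   sections, which gives the injectivity of A_0 and the projectivity of every
   A_i. Likewise, for y outside a submodule Q some A_0-linear functional into A_0
   vanishes on Q but not at y.

   For generation, let N be the A-submodule generated by M_i and j a least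
   degree with M_j not contained in N; then j > i. A functional on M_j that
   vanishes on M_j /\ N but not at some y in M_j, composed with the projection
   onto degree j, is a graded homomorphism M -> A_0<j>, because A_{>0} maps the
   lower degrees, which lie in N, into M_j /\ N. By hypothesis it is zero, a
   contradiction. *)

From mathcomp Require Import all_boot all_order all_algebra zify.
From mathcomp Require Import boolp classical_sets.
Set Implicit Arguments. Unset Strict Implicit. Unset Printing Implicit Defensive.
Import Order.TTheory GRing.Theory Num.Theory.
Local Open Scope classical_set_scope.
Local Open Scope ring_scope.

Lemma additive_map0 (X Y : zmodType) (f : X -> Y) :
  (forall x y, f (x + y) = f x + f y) -> f 0 = 0.
Proof. by move=> fD; apply: (addrI (f 0)); rewrite -fD !addr0. Qed.

Lemma additive_mapB (X Y : zmodType) (f : X -> Y) :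
  (forall x y, f (x + y) = f x + f y) -> forall x y, f (x - y) = f x - f y.
Proof.
move=> fD x y; rewrite fD; congr (_ + _).
by apply: (addrI (f y)); rewrite -fD !subrr (additive_map0 fD).
Qed.

Section A0Modules.
Variables (A : pzRingType) (G : nat -> pred A).
Hypothesis hG : pos_graded_ring G.

Lemma deg0_0 : 0 \in G 0%N. Proof. by case: hG => /(_ 0%N) []. Qed.
Lemma deg0_1 : 1 \in G 0%N. Proof. by case: hG. Qed.

Lemma deg0B a b : a \in G 0%N -> b \in G 0%N -> a - b \in G 0%N.
Proof. by case: hG => /(_ 0%N) [] _ + _ _ _ _; apply. Qed.

Lemma deg0N a : a \in G 0%N -> - a \in G 0%N.
Proof. by move=> ha; rewrite -sub0r deg0B ?deg0_0. Qed.

Lemma deg0D a b : a \in G 0%N -> b \in G 0%N -> a + b \in G 0%N.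
Proof. by move=> ha hb; rewrite -[b]opprK deg0B ?deg0N. Qed.

Lemma deg0M a b : a \in G 0%N -> b \in G 0%N -> a * b \in G 0%N.
Proof. by case: hG => _ + _ _ _ ha hb; move/(_ _ _ _ _ ha hb). Qed.

Section LeftIdeal.
Variable I : pred A.
Hypothesis hI : A0_left_ideal G I.

Lemma ideal_deg0 a : a \in I -> a \in G 0%N. Proof. by case: hI => + _ _; apply. Qed.
Lemma ideal0 : 0 \in I. Proof. by case: hI => _ []. Qed.
Lemma idealB a b : a \in I -> b \in I -> a - b \in I.
Proof. by case: hI => _ [_ +] _; apply. Qed.
Lemma idealMl r a : r \in G 0%N -> a \in I -> r * a \in I.
Proof. by case: hI => _ _; apply. Qed.

End LeftIdeal.

Variables (X : zmodType) (act : A -> X -> X).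
Hypothesis hX : A0_module G act.

Lemma act1 x : act 1 x = x. Proof. by case: (hX x x deg0_1 deg0_1). Qed.

Lemma actA r s x : r \in G 0%N -> s \in G 0%N -> act (r * s) x = act r (act s x).
Proof. by move=> hr hs; case: (hX x x hr hs). Qed.

Lemma actDl r s x : r \in G 0%N -> s \in G 0%N -> act (r + s) x = act r x + act s x.
Proof. by move=> hr hs; case: (hX x x hr hs). Qed.

Lemma actDr r x y : r \in G 0%N -> act r (x + y) = act r x + act r y.
Proof. by move=> hr; case: (hX x y hr hr). Qed.

Lemma act0r x : act 0 x = 0.
Proof. by apply: (addrI (act 0 x)); rewrite -actDl ?deg0_0 // !addr0. Qed.

Lemma actBl r s x : r \in G 0%N -> s \in G 0%N -> act (r - s) x = act r x - act s x.
Proof.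
move=> hr hs; rewrite actDl ?deg0N //; congr (_ + _).
by apply: (addrI (act s x)); rewrite -actDl ?deg0N // !subrr act0r.
Qed.

Lemma actr0 r : r \in G 0%N -> act r 0 = 0.
Proof. by move=> hr; apply: (additive_map0 (f := act r)) => x y; apply: actDr. Qed.

Lemma actBr r x y : r \in G 0%N -> act r (x - y) = act r x - act r y.
Proof. by move=> hr; apply: (additive_mapB (f := act r)) => x' y'; apply: actDr. Qed.

Definition act_closed (C : set X) : Prop :=
  (forall x y, C x -> C y -> C (x - y)) /\
  (forall r x, r \in G 0%N -> C x -> C (act r x)).

Definition submod (C : set X) : Prop := C 0 /\ act_closed C.

Lemma submodB C x y : submod C -> C x -> C y -> C (x - y).
Proof. by case=> _ [+ _]; apply. Qed.

Lemma submodZ C r x : submod C -> r \in G 0%N -> C x -> C (act r x).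
Proof. by case=> _ [_ +]; apply. Qed.

Lemma submodN C x : submod C -> C x -> C (- x).
Proof. by move=> hC cx; rewrite -sub0r; apply: submodB => //; case: hC. Qed.

Lemma submodD C x y : submod C -> C x -> C y -> C (x + y).
Proof.
move=> hC cx cy; have C0 : C 0 by case: hC.
by have := submodB hC cx (submodB hC C0 cy); rewrite sub0r opprK.
Qed.

Lemma submod0 : submod [set 0].
Proof. by split=> //; split=> [_ _ -> ->|r _ hr ->]; rewrite ?subrr ?actr0. Qed.

Lemma cyclic_submod c : submod [set z | exists2 r, r \in G 0%N & z = act r c].
Proof.
split; first by exists 0; rewrite ?act0r ?deg0_0.
split=> [_ _ [r hr ->] [s hs ->]|t _ ht [r hr ->]].
  by exists (r - s); rewrite ?actBl ?deg0B.
by exists (t * r); rewrite ?actA ?deg0M.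
Qed.

Definition sum_set (N C : set X) : set X :=
  [set z | exists n c, [/\ N n, C c & z = n + c]].

Lemma submod_sum N C : submod N -> submod C -> submod (sum_set N C).
Proof.
move=> hN hC; split; first by exists 0, 0; rewrite addr0; case: hN; case: hC.
split.
- move=> _ _ [n1 [c1 [n1N c1C ->]]] [n2 [c2 [n2N c2C ->]]].
  exists (n1 - n2), (c1 - c2).
  by split; [exact: submodB | exact: submodB | rewrite opprD addrACA].
- move=> r _ hr [n [c [nN cC ->]]].
  exists (act r n), (act r c).
  by split; [exact: submodZ | exact: submodZ | rewrite actDr].
Qed.

Lemma maximal_disjoint_submod N : exists C, [/\ submod C, N `&` C `<=` [set 0]
  & forall D, C `<` D -> act_closed D -> ~ N `&` D `<=` [set 0]].
Proof.
have [F FP Ftot|C [[Ccl CN] Cmax]] :=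
  Zorn_bigcup (P := [set C | act_closed C /\ N `&` C `<=` [set 0]]).
  split; first split.
  - move=> x y [C1 F1 x1] [C2 F2 x2].
    have [C12|C21] := Ftot _ _ F1 F2.
    + by exists C2 => //; case: (FP _ F2) => -[+ _] _; apply=> //; apply: C12.
    + by exists C1 => //; case: (FP _ F1) => -[+ _] _; apply=> //; apply: C21.
  - move=> r x hr [C1 F1 x1]; exists C1 => //.
    by case: (FP _ F1) => -[_ +] _; apply.
  - by move=> x [Nx [C1 F1 x1]]; case: (FP _ F1) => _; apply.
exists C; split=> // [|D CD Dcl DN]; last by apply: (Cmax D).
(* The empty chain has the empty union, so Zorn's lemma runs over [act_closed]
   sets and [C 0] comes from maximality. *)
split=> //; have [[x Cx]|noC] := pselect (exists x, C x).
  by case: Ccl => + _ => /(_ x x Cx Cx); rewrite subrr.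
have C_lt0 : C `<` [set 0].
  by split=> [y Cy|/(_ 0 erefl) C0]; case: noC; [exists y | exists 0].
have [_ cl0] := submod0.
have N0 : N `&` [set 0] `<=` [set 0] by move=> y [_ ->].
by case: (Cmax _ C_lt0 (conj cl0 N0)).
Qed.

Definition conductor (S : set X) y : pred A :=
  fun r => `[< r \in G 0%N /\ S (act r y) >].

Lemma conductor_left_ideal S y : submod S -> A0_left_ideal G (conductor S y).
Proof.
move=> hS; split=> [r /asboolP [] //||r s hr /asboolP [hs sy]].
  split=> [|r s /asboolP [hr ry] /asboolP [hs sy]]; apply/asboolP.
    by split; [exact: deg0_0 | rewrite act0r; case: hS].
  by split; [exact: deg0B | rewrite actBl //; apply: submodB].
by apply/asboolP; split; [exact: deg0M | rewrite actA //; apply: submodZ].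
Qed.

Hypothesis hss : A0_semisimple G.

Lemma maximal_disjoint_spans N C :
  submod N -> submod C -> N `&` C `<=` [set 0] ->
  (forall D, C `<` D -> act_closed D -> ~ N `&` D `<=` [set 0]) ->
  forall y, sum_set N C y.
Proof.
move=> hN hC NC Cmax y; apply: contrapT => NCy.
have hNC := submod_sum hN hC.
have [J [hJ IJ IJ1]] := hss (conductor_left_ideal y hNC).
have [e [f [/asboolP [eG ey] fJ ef]]] := IJ1 1 deg0_1.
have NCfy : ~ sum_set N C (act f y).
  move=> fy; apply: NCy; rewrite -[y]act1 ef (actDl _ eG (ideal_deg0 hJ fJ)).
  exact: submodD.
pose D : set X := [set z | exists c s, [/\ C c, s \in J & z = c + act s y]].
have CltD : C `<` D.
  split=> [c Cc|DC].
    by exists c, 0; rewrite act0r addr0; split=> //; apply: ideal0.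
  apply: NCfy; exists 0, (act f y); rewrite add0r; split=> //; first by case: hN.
  by apply: DC; exists 0, f; rewrite add0r; split=> //; case: hC.
have Dcl : act_closed D.
  split.
  - move=> _ _ [c1 [s1 [c1C s1J ->]]] [c2 [s2 [c2C s2J ->]]].
    exists (c1 - c2), (s1 - s2).
    rewrite actBl ?(ideal_deg0 hJ s1J) ?(ideal_deg0 hJ s2J) // opprD addrACA.
    by split=> //; [apply: submodB | apply: idealB].
  - move=> r _ hr [c [s [cC sJ ->]]].
    exists (act r c), (r * s); rewrite actDr // actA ?(ideal_deg0 hJ sJ) //.
    by split=> //; [apply: submodZ | apply: idealMl].
apply: (Cmax D CltD Dcl).
move=> x [Nx [c [s [cC sJ ex]]]].
have sI : s \in conductor (sum_set N C) y.
  apply/asboolP; split; first exact: (ideal_deg0 hJ).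
  exists x, (- c); split=> //; first exact: submodN.
  by rewrite ex addrAC subrr add0r.
by apply: NC; split=> //; rewrite ex (IJ s sI sJ) act0r addr0.
Qed.

Lemma submod_complement N : submod N ->
  exists C, [/\ submod C, N `&` C `<=` [set 0] & forall y, sum_set N C y].
Proof.
move=> hN; have [C [hC NC Cmax]] := maximal_disjoint_submod N.
by exists C; split=> //; apply: maximal_disjoint_spans.
Qed.

Lemma submod_projection N : submod N ->
  exists pi : X -> X, [/\ A0_hom G act act pi, forall x, N (pi x)
                        & forall n, N n -> pi n = n].
Proof.
move=> hN; have [C [hC NC NCX]] := submod_complement hN.
pose pi x := xget 0 [set n | N n /\ C (x - n)].
have piE x n : N n -> C (x - n) -> pi x = n.
  move=> Nn Cn; apply: xget_unique => // n' [Nn' Cn'].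
  apply/eqP; rewrite -subr_eq0; apply/eqP; apply: NC; split; first exact: submodB.
  by have := submodB hC Cn Cn'; rewrite opprB addrC addrA subrK.
have piP x : N (pi x) /\ C (x - pi x).
  by have [n [c [Nn Cc ->]]] := NCX x; rewrite (piE _ n) // addrC addKr.
exists pi; split=> [|x|n Nn]; first split.
- move=> x y; have [Nx Cx] := piP x; have [Ny Cy] := piP y.
  by apply: piE; [apply: (submodD hN) | rewrite opprD addrACA; apply: (submodD hC)].
- move=> r x hr; have [Nx Cx] := piP x.
  by apply: piE; [apply: (submodZ hN) | rewrite -actBr //; apply: (submodZ hC)].
- by case: (piP x).
- by apply: piE; rewrite // subrr; case: hC.
Qed.

Lemma A0_functional_nonzero c : c != 0 ->
  exists F : X -> A, A0_hom_to0 G act F /\ F c != 0.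
Proof.
move=> c0.
have [J [hJ annJ annJ1]] := hss (conductor_left_ideal c submod0).
have [e [f [/asboolP [eG /= ec] fJ ef]]] := annJ1 1 deg0_1.
have fG := ideal_deg0 hJ fJ.
have fc : act f c = c by rewrite -{2}[c]act1 ef actDl // ec add0r.
have [pi [[piD piZ] piAc piK]] := submod_projection (cyclic_submod c).
(* [r c |-> r f] is well defined: it is the isomorphism of [A_0 c] onto [J]. *)
pose coef z := xget 0 [set t | exists2 r, r \in G 0%N & z = act r c /\ t = r * f].
have coefE r : r \in G 0%N -> coef (act r c) = r * f.
  move=> hr; apply: xget_unique; first by exists r.
  move=> _ [r' hr' [erc ->]]; apply/subr0_eq; rewrite -mulrBl.
  apply: annJ; last by apply: idealMl => //; apply: deg0B.
  apply/asboolP; split; first by rewrite deg0M ?deg0B.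
  by rewrite /= actA ?deg0B // fc actBl // erc subrr.
exists (fun z => coef (pi z)); split; first split.
- by move=> z; have [r hr ->] := piAc z; rewrite coefE // deg0M.
- move=> z1 z2; have [r1 hr1 e1] := piAc z1; have [r2 hr2 e2] := piAc z2.
  by rewrite piD e1 e2 -actDl // !coefE ?deg0D // mulrDl.
- move=> t z ht; have [r hr e1] := piAc z.
  by rewrite piZ // e1 -actA // !coefE ?deg0M // mulrA.
- rewrite piK; last by exists 1; rewrite ?act1 ?deg0_1.
  rewrite -[c in coef c]act1 coefE ?deg0_1 // mul1r.
  by apply: contraNneq c0 => f0; rewrite -fc f0 act0r.
Qed.

Lemma A0_functional_separating Q y : submod Q -> ~ Q y ->
  exists F : X -> A, [/\ A0_hom_to0 G act F, forall q, Q q -> F q = 0 & F y != 0].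
Proof.
move=> hQ Qy; have [pi [[piD piZ] piQ piK]] := submod_projection hQ.
have c0 : y - pi y != 0 by apply/eqP => /subr0_eq e; apply: Qy; rewrite e.
have [F [[FG FD FZ] Fc]] := A0_functional_nonzero c0.
exists (fun z => F (z - pi z)); split=> //; first split.
- by move=> z; apply: FG.
- by move=> z1 z2; rewrite piD opprD addrACA -FD.
- by move=> r z hr; rewrite piZ // -actBr // FZ.
- by move=> q Qq; rewrite piK // subrr (additive_map0 FD).
Qed.

End A0Modules.

Section Splitting.
Variables (A : pzRingType) (G : nat -> pred A).
Hypotheses (hG : pos_graded_ring G) (hss : A0_semisimple G).
Variables (X Y : zmodType) (actX : A -> X -> X) (actY : A -> Y -> Y).
Hypotheses (hX : A0_module G actX) (hY : A0_module G actY).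

Lemma A0_hom_injective_retraction (iota : X -> Y) :
  A0_hom G actX actY iota -> injective iota ->
  exists rho : Y -> X, A0_hom G actY actX rho /\ cancel iota rho.
Proof.
move=> [iD iZ] iinj.
have hN : submod G actY (range iota).
  split; first by exists 0 => //; apply: additive_map0.
  split=> [_ _ [x1 _ <-] [x2 _ <-]|r _ hr [x _ <-]].
    by exists (x1 - x2) => //; apply: additive_mapB.
  by exists (actX r x) => //; apply: iZ.
have [pi [[piD piZ] piN piK]] := submod_projection hG hY hss hN.
pose rho y := xget 0 [set x | iota x = pi y].
have rhoP y : iota (rho y) = pi y.
  by have [x _ ex] := piN y; apply: (xgetPex 0 (P := [set x | iota x = pi y])); exists x.
exists rho; split; first split.
- by move=> y1 y2; apply: iinj; rewrite iD !rhoP piD.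
- by move=> r y hr; apply: iinj; rewrite iZ // !rhoP piZ.
- by move=> x; apply: iinj; rewrite rhoP piK //; exists x.
Qed.

Lemma A0_hom_surjective_section (p : X -> Y) :
  A0_hom G actX actY p -> (forall y, exists x, p x = y) ->
  exists s : Y -> X, A0_hom G actY actX s /\ cancel s p.
Proof.
move=> [pD pZ] psurj.
have hK : submod G actX [set x | p x = 0].
  split; first exact: additive_map0.
  split=> [x1 x2 /= e1 e2|r x hr /= e].
    by rewrite additive_mapB // e1 e2 subrr.
  by rewrite pZ // e (actr0 hY).
have [pi [[piD piZ] p_pi piK]] := submod_projection hG hX hss hK.
pose q x := x - pi x.
have qD x1 x2 : q (x1 + x2) = q x1 + q x2 by rewrite /q piD opprD addrACA.
pose pre y := xget 0 [set x | p x = y].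
have preK y : p (pre y) = y by exact: (xgetPex 0 (psurj y)).
have q_pre x : q (pre (p x)) = q x.
  apply/subr0_eq; rewrite -(additive_mapB qD) /q piK ?subrr //=.
  by rewrite additive_mapB // preK subrr.
exists (fun y => q (pre y)); split; first split.
- by move=> y1 y2; have [x1 <-] := psurj y1; have [x2 <-] := psurj y2; rewrite -pD !q_pre.
- by move=> r y hr; have [x <-] := psurj y; rewrite -pZ // !q_pre /q piZ // (actBr hX).
- move=> y; have [x <-] := psurj y; rewrite q_pre /q additive_mapB //.
  by rewrite (p_pi x) subr0.
Qed.

End Splitting.

Lemma A0_self_injective_of_semisimple (A : pzRingType) (G : nat -> pred A) :
  pos_graded_ring G -> A0_semisimple G -> A0_self_injective G.
Proof.
move=> hG hss X Y actX actY iota g hX hY hiota iinj [gG gD gZ].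
have [rho [[rhoD rhoZ] rhoK]] := A0_hom_injective_retraction hG hss hY hiota iinj.
exists (g \o rho); split=> [|x]; last by rewrite /= rhoK.
by split=> [y|y1 y2|r y hr] /=; rewrite ?rhoD ?rhoZ ?gD ?gZ.
Qed.

Lemma A0_projective_of_semisimple (A : pzRingType) (G : nat -> pred A) (P : pred A) :
  pos_graded_ring G -> A0_semisimple G -> A0_projective G P.
Proof.
move=> hG hss X Y actX actY p g hX hY hp psurj [gD gZ].
have [s [[sD sZ] sK]] := A0_hom_surjective_section hG hss hX hY hp psurj.
exists (s \o g); split=> [|a _]; last by rewrite /= sK.
by split=> [a b ha hb|r a hr ha] /=; rewrite ?gD ?gZ ?sD ?sZ.
Qed.

Section GradedComponents.
Variables (A : pzRingType) (G : nat -> pred A) (M : lmodType A) (MG : int -> pred M).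
Hypothesis hM : graded_module G MG.

Lemma deg_mem0 k : 0 \in MG k. Proof. by case: hM => /(_ k) []. Qed.

Lemma deg_memB k m1 m2 : m1 \in MG k -> m2 \in MG k -> m1 - m2 \in MG k.
Proof. by case: hM => /(_ k) [] _ + _ _ _; apply. Qed.

Lemma deg_memD k m1 m2 : m1 \in MG k -> m2 \in MG k -> m1 + m2 \in MG k.
Proof.
by move=> h1 h2; have := deg_memB h1 (deg_memB (deg_mem0 k) h2); rewrite sub0r opprK.
Qed.

Lemma deg_memZ (l : nat) k a m : a \in G l -> m \in MG k -> a *: m \in MG (l%:Z + k).
Proof. by case: hM => _ + _ _; apply. Qed.

Lemma deg_memZ0 k a m : a \in G 0%N -> m \in MG k -> a *: m \in MG k.
Proof. by move=> ha hm; have := deg_memZ ha hm; rewrite add0r. Qed.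

Lemma homogeneous_ind (P : M -> Prop) :
  P 0 -> (forall m1 m2, P m1 -> P m2 -> P (m1 + m2)) ->
  (forall k m, m \in MG k -> P m) -> forall m, P m.
Proof.
move=> P0 PD Ph m; case: hM => _ _ /(_ m) [s [x [_ xh ->]]] _.
by apply: big_ind => // k _; apply: (Ph k).
Qed.

Definition decomposes m (x : int -> M) : Prop :=
  (forall k, x k \in MG k) /\ exists s : seq int,
    [/\ uniq s, forall k, k \notin s -> x k = 0 & m = \sum_(k <- s) x k].

Lemma sum_over_support (x : int -> M) s u : uniq s -> uniq u -> {subset s <= u} ->
  (forall k, k \notin s -> x k = 0) -> \sum_(k <- s) x k = \sum_(k <- u) x k.
Proof.
move=> us uu su x0; rewrite [RHS](bigID (mem s)) /= [X in _ + X]big1 ?addr0 //.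
  rewrite -[RHS]big_filter; apply: perm_big.
  apply: uniq_perm => //; first exact: filter_uniq.
  by move=> k; rewrite mem_filter; case: (boolP (k \in s)) => // /su ->.
Qed.

Lemma decomposes_exists m : exists x, decomposes m x.
Proof.
case: hM => _ _ /(_ m) [s [x [us xh ->]]] _.
exists (fun k => if k \in s then x k else 0); split=> [k|].
  by case: ifP => _; rewrite ?deg_mem0.
exists s; split=> // [k /negbTE -> //|].
by apply: eq_big_seq => k ->.
Qed.

Lemma decomposes_common m1 x1 m2 x2 : decomposes m1 x1 -> decomposes m2 x2 ->
  exists u : seq int, [/\ uniq u, forall k, k \notin u -> x1 k = 0 /\ x2 k = 0,
    m1 = \sum_(k <- u) x1 k & m2 = \sum_(k <- u) x2 k].
Proof.
move=> [_ [s1 [us1 x10 ->]]] [_ [s2 [us2 x20 ->]]].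
exists (undup (s1 ++ s2)); have uu := undup_uniq (s1 ++ s2).
have s1u : {subset s1 <= undup (s1 ++ s2)}.
  by move=> k; rewrite mem_undup mem_cat => ->.
have s2u : {subset s2 <= undup (s1 ++ s2)}.
  by move=> k; rewrite mem_undup mem_cat => ->; rewrite orbT.
split; rewrite ?(sum_over_support us1 uu s1u) ?(sum_over_support us2 uu s2u) //.
by move=> k ku; split; [apply: x10; apply: contra ku; apply: s1u
                       | apply: x20; apply: contra ku; apply: s2u].
Qed.

Lemma decomposes_unique m x y : decomposes m x -> decomposes m y -> x =1 y.
Proof.
move=> dx dy k; have [xh _] := dx; have [yh _] := dy.
have [u [uu uout ex ey]] := decomposes_common dx dy.
have [ku|ku] := boolP (k \in u); last by have [-> ->] := uout k ku.
case: hM => _ _ _ /(_ u (fun k => x k - y k) uu) Hu.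
apply/subr0_eq; apply: Hu ku => [j|]; first by apply: deg_memB.
by rewrite sumrB -ex -ey subrr.
Qed.

Lemma decomposesD m1 x1 m2 x2 : decomposes m1 x1 -> decomposes m2 x2 ->
  decomposes (m1 + m2) (fun k => x1 k + x2 k).
Proof.
move=> d1 d2; have [u [uu uout -> ->]] := decomposes_common d1 d2.
split=> [k|]; first by apply: deg_memD; [case: d1 | case: d2].
exists u; split=> // [k /uout [-> ->]|]; first by rewrite addr0.
by rewrite big_split.
Qed.

Lemma decomposesZ0 r m x : r \in G 0%N -> decomposes m x ->
  decomposes (r *: m) (fun k => r *: x k).
Proof.
move=> hr [xh [s [us x0 ->]]]; split=> [k|]; first exact: deg_memZ0.
by exists s; split=> // [k /x0 ->|]; rewrite ?scaler0 ?scaler_sumr.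
Qed.

Lemma decomposes_homogeneous k m : m \in MG k ->
  decomposes m (fun j => if j == k then m else 0).
Proof.
move=> hm; split=> [j|]; first by case: eqP => [->|_]; rewrite ?deg_mem0.
exists [:: k]; split=> // [j|]; last by rewrite big_seq1 eqxx.
by rewrite inE => /negbTE ->.
Qed.

Definition component j m := xget 0 [set y | exists2 x, decomposes m x & y = x j].

Lemma componentE j m x : decomposes m x -> component j m = x j.
Proof.
move=> dx; apply: xget_unique; first by exists x.
by move=> _ [x' dx' ->]; apply: (decomposes_unique dx' dx).
Qed.

Lemma component_mem j m : component j m \in MG j.
Proof. by have [x dx] := decomposes_exists m; rewrite (componentE j dx); case: dx. Qed.

Lemma componentD j m1 m2 : component j (m1 + m2) = component j m1 + component j m2.
Proof.
have [x1 d1] := decomposes_exists m1; have [x2 d2] := decomposes_exists m2.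
by rewrite (componentE j (decomposesD d1 d2)) (componentE j d1) (componentE j d2).
Qed.

Lemma componentZ0 j r m : r \in G 0%N -> component j (r *: m) = r *: component j m.
Proof.
move=> hr; have [x d] := decomposes_exists m.
by rewrite (componentE j (decomposesZ0 hr d)) (componentE j d).
Qed.

Lemma component_homogeneous j k m : m \in MG k ->
  component j m = if j == k then m else 0.
Proof. by move/decomposes_homogeneous/componentE ->. Qed.

Lemma component0 j : component j 0 = 0.
Proof. by rewrite (component_homogeneous j (deg_mem0 j)); case: eqP. Qed.

End GradedComponents.

Lemma scale_A0_module (A : pzRingType) (G : nat -> pred A) (M : lmodType A) :
  A0_module G (fun r (m : M) => r *: m).
Proof. by move=> r s x y _ _; rewrite scale1r scalerA scalerDl scalerDr. Qed.

Section Generation.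
Variables (A : pzRingType) (G : nat -> pred A) (M : lmodType A) (MG : int -> pred M).
Hypotheses (hG : pos_graded_ring G) (hss : A0_semisimple G) (hM : graded_module G MG).
Variable i : int.

Definition spanned_by_degree m : Prop := exists l : seq (A * M),
  (forall p, p \in l -> p.2 \in MG i) /\ m = \sum_(p <- l) p.1 *: p.2.

Lemma spanned0 : spanned_by_degree 0.
Proof. by exists [::]; rewrite big_nil. Qed.

Lemma spannedD m1 m2 :
  spanned_by_degree m1 -> spanned_by_degree m2 -> spanned_by_degree (m1 + m2).
Proof.
move=> [l1 [h1 ->]] [l2 [h2 ->]]; exists (l1 ++ l2); rewrite big_cat.
by split=> // p; rewrite mem_cat => /orP [/h1|/h2].
Qed.

Lemma spannedZ a m : spanned_by_degree m -> spanned_by_degree (a *: m).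
Proof.
move=> [l [h ->]]; exists [seq (a * p.1, p.2) | p <- l]; split.
  by move=> q /mapP [p pl ->]; exact: (h p pl).
by rewrite scaler_sumr big_map; apply: eq_bigr => p _; rewrite scalerA.
Qed.

Lemma spanned_homogeneous m : m \in MG i -> spanned_by_degree m.
Proof.
move=> hm; exists [:: (1, m)]; rewrite big_seq1 scale1r.
by split=> // p; rewrite inE => /eqP ->.
Qed.

Section Step.
Variable j : int.
Hypothesis spanned_below : forall k, k < j -> forall m, m \in MG k -> spanned_by_degree m.

Lemma component_scale_pos_spanned (l : nat) a m :
  a \in G l.+1 -> spanned_by_degree (component MG j (a *: m)).
Proof.
move=> ha; elim/(homogeneous_ind hM): m => [|m1 m2 s1 s2|k m hm].
- by rewrite scaler0 (component0 hM); apply: spanned0.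
- by rewrite scalerDr (componentD hM); apply: spannedD.
rewrite (component_homogeneous hM j (deg_memZ hM ha hm)).
case: eqP => [ejk|_]; last exact: spanned0.
by apply/spannedZ/(spanned_below _ hm); rewrite ejk; lia.
Qed.

Lemma functional_component_shift_hom (F : M -> A) :
  A0_hom_to0 G (fun r (m : M) => r *: m) F ->
  (forall z, z \in MG j -> spanned_by_degree z -> F z = 0) ->
  hom_to_A0_shift G MG j (fun m => F (component MG j m)).
Proof.
move=> [FG FD FZ] FQ; pose f m := F (component MG j m).
have fD m1 m2 : f (m1 + m2) = f m1 + f m2 by rewrite /f (componentD hM).
have f_pos (l : nat) a m : a \in G l.+1 -> f (a *: m) = 0.
  move=> ha; apply: FQ; first exact: (component_mem hM).
  exact: component_scale_pos_spanned ha.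
split=> [m|m1 m2|k m kj hm|a a0 m [a0G [n [x [xG ea]]]]].
- exact: FG.
- exact: fD.
- by rewrite (component_homogeneous hM j hm) eq_sym (negbTE kj) (additive_map0 FD).
- rewrite -[a](subrK a0) ea addrC scalerDl (componentD hM) FD (componentZ0 hM) //.
  rewrite FZ ?(component_mem hM) // -[RHS]addr0; congr (_ + _).
  rewrite -/(f _) scaler_suml.
  apply: (big_ind (fun z => f z = 0)) => [|z1 z2 h1 h2|l _].
  + exact: additive_map0 fD.
  + by rewrite fD h1 h2 addr0.
  + exact: f_pos (xG l).
Qed.

Lemma spanned_by_degree_step : Hom_to_A0_shift_zero G MG j ->
  forall y, y \in MG j -> spanned_by_degree y.
Proof.
move=> hom0 y yj; apply: contrapT => ny.
pose Q : set M := [set z | z \in MG j /\ spanned_by_degree z].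
have hQ : submod G (fun r (m : M) => r *: m) Q.
  split; first by split; [apply: (deg_mem0 hM) | apply: spanned0].
  split=> [m1 m2 [h1 s1] [h2 s2]|r m hr [hm sm]].
    split; first exact: (deg_memB hM).
    by rewrite -scaleN1r; apply: spannedD => //; apply: spannedZ.
  by split; [apply: (deg_memZ0 hM) | apply: spannedZ].
have [F [hF FQ Fy]] :=
  A0_functional_separating hG (@scale_A0_module _ G M) hss hQ (fun Qy => ny Qy.2).
have := hom0 _ (functional_component_shift_hom hF (fun z hz sz => FQ z (conj hz sz))) y.
by rewrite (component_homogeneous hM j yj) eqxx => Fy0; rewrite Fy0 eqxx in Fy.
Qed.
End Step.

Hypotheses (below_zero : forall j, j < i -> forall m, m \in MG j -> m = 0)
  (hom_zero : forall n, n != i -> Hom_to_A0_shift_zero G MG n).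

Lemma spanned_by_degree_all m : spanned_by_degree m.
Proof.
have below n k : k < i + n%:Z -> forall m, m \in MG k -> spanned_by_degree m.
  elim: n k => [|n IHn] k kn m' hm.
    by rewrite addr0 in kn; rewrite (below_zero kn hm); apply: spanned0.
  have [ek | ki] := eqVneq k i; first by apply: spanned_homogeneous; rewrite -ek.
  have [kn'|kn'] := ltP k (i + n%:Z); first exact: IHn kn' m' hm.
  have lower k' : k' < k -> forall m, m \in MG k' -> spanned_by_degree m.
    by move=> k'k; apply: IHn; lia.
  exact: (spanned_by_degree_step lower (hom_zero ki) hm).
elim/(homogeneous_ind hM): m => [|m1 m2|k m hm]; [exact: spanned0 | exact: spannedD |].
by apply: (below `|k - i|.+1 k) hm; lia.
Qed.

End Generation.

Theorem mainTheorem7 (A : pzRingType) (G : nat -> pred A) :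
  pos_graded_ring G -> A0_semisimple G -> pre_Koszul G.
Proof.
move=> hG hss; split.
- exact: A0_self_injective_of_semisimple.
- by move=> n; apply: A0_projective_of_semisimple.
move=> M MG i hM below_zero hom_zero m.
have [l [hl ->]] := spanned_by_degree_all hG hss hM below_zero hom_zero m.
exists (size l), (fun n => (nth (0, 0) l n).1), (fun n => (nth (0, 0) l n).2).
split; last by rewrite (big_nth (0, 0)) big_mkord.
move=> n; have [nl|ln] := ltnP n (size l); first by apply/hl/mem_nth.
by rewrite nth_default //; apply: (deg_mem0 hM).
Qed.
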